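(* Let $G$ be a graph with $|V(G)|=2^k$, $\mathrm{enc}:V(G)\to\{0,1\}^k$ a bijection, and $R[G]=(P,N)$ with $P=\{\mathrm{enc}(u)1\mathrm{enc}(u)^R:u\in V(G)\}$, $N=\{\mathrm{enc}(u)1\mathrm{enc}(v)^R:uv\in E(G)\}$. Then every NFA consistent with $(P,N)$ has at least $\chi(G)$ states. Consequently $\mathrm{opt}_{DFA}(R[G])\ge\mathrm{opt}_{NFA}(R[G])\ge\chi(G)$.
   Context: $\chi(G)$ is the chromatic number. $\mathrm{opt}_{DFA}$ and $\mathrm{opt}_{NFA}$ denote the minimum number of states of a DFA (possibly with partial transition function), resp. NFA, over $\{0,1\}$ that accepts all of $P$ and rejects all of $N$. $x^R$ is string reversal. *)

From HB Require Import structures.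
From mathcomp Require Import all_boot.
Set Implicit Arguments. Unset Strict Implicit. Unset Printing Implicit Defensive.

(* Words over the alphabet {0,1}, encoded as bool (false = 0, true = 1). *)
Definition word := seq bool.

Definition proper_colorable (T : finType) (e : rel T) (n : nat) : bool :=
  [exists f : {ffun T -> 'I_n}, [forall u, forall v, e u v ==> (f u != f v)]].

Lemma proper_colorable_card (T : finType) (e : rel T) :
  irreflexive e -> proper_colorable e #|T|.
Proof.
move=> irr; apply/existsP; exists [ffun u => enum_rank u].
apply/forallP=> u; apply/forallP=> v; apply/implyP=> euv; rewrite !ffunE.
apply/negP=> /eqP/enum_rank_inj eq_uv; by rewrite eq_uv irr in euv.
Qed.

Lemma proper_colorable_ex (T : finType) (e : rel T) :
  irreflexive e -> exists n, proper_colorable e n.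
Proof. by move=> irr; exists #|T|; apply: proper_colorable_card. Qed.

Definition chromatic_number (T : finType) (e : rel T) (irr : irreflexive e) : nat :=
  ex_minn (proper_colorable_ex irr).

Record nfa (S : finType) := NFA {
  nfa_start : S;
  nfa_final : {set S};
  nfa_trans : S -> bool -> {set S} }.

Definition nfa_step (S : finType) (A : nfa S) (X : {set S}) (a : bool) : {set S} :=
  \bigcup_(s in X) nfa_trans A s a.

Definition nfa_accepts (S : finType) (A : nfa S) (w : word) : bool :=
  [exists s in foldl (nfa_step A) [set nfa_start A] w, s \in nfa_final A].

Record dfa (S : finType) := DFA {
  dfa_start : S;
  dfa_final : {set S};
  dfa_trans : S -> bool -> option S }.

Definition dfa_run (S : finType) (D : dfa S) (w : word) : option S :=
  foldl (fun (o : option S) a => if o is Some s then dfa_trans D s a else None)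
        (Some (dfa_start D)) w.

Definition dfa_accepts (S : finType) (D : dfa S) (w : word) : bool :=
  if dfa_run D w is Some s then s \in dfa_final D else false.

Definition consistent (acc : word -> bool) (P N : word -> Prop) : Prop :=
  (forall w, P w -> acc w) /\ (forall w, N w -> ~~ acc w).

Definition RG_word (k : nat) (x y : k.-tuple bool) : word :=
  (x : seq bool) ++ true :: rev (y : seq bool).

Definition RG_pos (T : finType) (k : nat) (enc : T -> k.-tuple bool) (w : word) : Prop :=
  exists u : T, w = RG_word (enc u) (enc u).

Definition RG_neg (T : finType) (e : rel T) (k : nat) (enc : T -> k.-tuple bool)
  (w : word) : Prop :=
  exists u v : T, e u v /\ w = RG_word (enc u) (enc v).

From HB Require Import structures.
From mathcomp Require Import all_boot.
Set Implicit Arguments. Unset Strict Implicit. Unset Printing Implicit Defensive.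

(* Fooling-set argument: in an NFA consistent with R[G], colour u by a state s
   reached on enc(u) from which 1 enc(u)^R is accepted.  If adjacent u, v got
   the same state, the NFA would accept enc(u) 1 enc(v)^R, a negative word.
   A DFA is an NFA with the same states, so the DFA bound follows. *)

Lemma chromatic_number_le_card (T : finType) (e : rel T) (irr : irreflexive e)
    (S : finType) (c : T -> S) :
  (forall u v, e u v -> c u != c v) -> chromatic_number irr <= #|S|.
Proof.
move=> c_proper; rewrite /chromatic_number; case: ex_minnP => m _ m_min.
apply: m_min; apply/existsP; exists [ffun u => enum_rank (c u)].
apply/forallP=> u; apply/forallP=> v; apply/implyP=> euv; rewrite !ffunE.
by apply: contra (c_proper u v euv) => /eqP/enum_rank_inj ->.
Qed.

Section NfaRuns.

Variables (S : finType) (A : nfa S).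

Definition nfa_accepts_from (s : S) (w : word) : bool :=
  [exists f in foldl (nfa_step A) [set s] w, f \in nfa_final A].

Lemma nfa_step_subset (X Y : {set S}) a :
  X \subset Y -> nfa_step A X a \subset nfa_step A Y a.
Proof.
move=> /subsetP sXY; apply/subsetP=> t /bigcupP [s sX ts].
by apply/bigcupP; exists s => //; apply: sXY.
Qed.

Lemma nfa_run_subset w (X Y : {set S}) :
  X \subset Y -> foldl (nfa_step A) X w \subset foldl (nfa_step A) Y w.
Proof. by elim: w X Y => [|a w IHw] X Y //= sXY; apply/IHw/nfa_step_subset. Qed.

Lemma nfa_run_from_member w (X : {set S}) s :
  s \in X -> foldl (nfa_step A) [set s] w \subset foldl (nfa_step A) X w.
Proof. by move=> sX; apply: nfa_run_subset; rewrite sub1set. Qed.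

Lemma nfa_run_source w (X : {set S}) t :
  t \in foldl (nfa_step A) X w ->
  exists2 s, s \in X & t \in foldl (nfa_step A) [set s] w.
Proof.
elim: w X => [|a w IHw] X /= => [tX|/IHw [r /bigcupP [s sX rs] tr]].
  by exists t; rewrite ?set11.
exists s => //; apply: subsetP tr; apply: nfa_run_from_member.
by apply/bigcupP; exists s; rewrite ?set11.
Qed.

Lemma nfa_accepts_catP x y :
  reflect (exists2 s, s \in foldl (nfa_step A) [set nfa_start A] x
                    & nfa_accepts_from s y)
          (nfa_accepts A (x ++ y)).
Proof.
rewrite /nfa_accepts foldl_cat; apply: (iffP existsP) => [[f /andP [fR fF]]|].
  have [s sR fs] := nfa_run_source fR.
  by exists s => //; apply/existsP; exists f; rewrite fs.
move=> [s sR /existsP [f /andP [fs fF]]]; exists f; rewrite fF andbT.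
exact: subsetP (nfa_run_from_member y sR) f fs.
Qed.

End NfaRuns.

Lemma nfa_fooling_chromatic_bound (T : finType) (e : rel T)
    (irr : irreflexive e) (S : finType) (A : nfa S) (x y : T -> word) :
  (forall u, nfa_accepts A (x u ++ y u)) ->
  (forall u v, e u v -> ~~ nfa_accepts A (x u ++ y v)) ->
  chromatic_number irr <= #|S|.
Proof.
move=> accept_uu reject_uv.
pose fooling u s := (s \in foldl (nfa_step A) [set nfa_start A] (x u))
                    && nfa_accepts_from A s (y u).
pose c u := odflt (nfa_start A) [pick s | fooling u s].
have foolingP u : fooling u (c u).
  rewrite /c; case: pickP => [//|no_state].
  have [s sR sy] := nfa_accepts_catP A (x u) (y u) (accept_uu u).
  by have := no_state s; rewrite /fooling sR sy.
apply: (chromatic_number_le_card irr (c := c)) => u v euv.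
apply: contra (reject_uv u v euv) => /eqP cuv; apply/nfa_accepts_catP.
have /andP [cuR _] := foolingP u; have /andP [_ cvy] := foolingP v.
by exists (c u); rewrite // cuv.
Qed.

Section DfaAsNfa.

Variables (S : finType) (D : dfa S).

Definition set_of_option (o : option S) : {set S} :=
  if o is Some s then [set s] else set0.

Definition nfa_of_dfa : nfa S :=
  NFA (dfa_start D) (dfa_final D) (fun s a => set_of_option (dfa_trans D s a)).

Lemma nfa_of_dfa_run w (o : option S) :
  foldl (nfa_step nfa_of_dfa) (set_of_option o) w =
  set_of_option (foldl (fun o a => if o is Some s then dfa_trans D s a else None) o w).
Proof.
elim: w o => [|a w IHw] [s|] //=; rewrite -IHw /nfa_step ?big_set1 //.
by rewrite big_set0.
Qed.

Lemma nfa_of_dfa_accepts w : nfa_accepts nfa_of_dfa w = dfa_accepts D w.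
Proof.
rewrite /nfa_accepts /dfa_accepts /dfa_run.
rewrite -[[set nfa_start _]]/(set_of_option (Some (dfa_start D))) nfa_of_dfa_run.
case: foldl => [s|] /=; last by apply/existsP => -[f]; rewrite inE.
by apply/existsP/idP => [[f /andP [/set1P -> //]]|sF]; exists s; rewrite ?set11.
Qed.

End DfaAsNfa.

Theorem mainTheorem7 (T : finType) (e : rel T) (k : nat)
    (enc : T -> k.-tuple bool)
    (e_sym : symmetric e) (e_irr : irreflexive e)
    (cardT : #|T| = 2 ^ k) (enc_bij : bijective enc) :
  (forall (S : finType) (A : nfa S),
      consistent (nfa_accepts A) (RG_pos enc) (RG_neg e enc) ->
      chromatic_number e_irr <= #|S|)
  /\
  (forall (S : finType) (D : dfa S),
      consistent (dfa_accepts D) (RG_pos enc) (RG_neg e enc) ->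
      chromatic_number e_irr <= #|S|).
Proof.
have nfa_bound S (A : nfa S) :
    consistent (nfa_accepts A) (RG_pos enc) (RG_neg e enc) ->
    chromatic_number e_irr <= #|S|.
  move=> [accP rejN].
  apply: (nfa_fooling_chromatic_bound e_irr (x := fun u => enc u : word)
                                      (y := fun u => true :: rev (enc u))).
    by move=> u; apply: accP; exists u.
  by move=> u v euv; apply: rejN; exists u, v.
split=> // S D [accP rejN]; apply: (nfa_bound S (nfa_of_dfa D)).
by split=> w; rewrite nfa_of_dfa_accepts; [apply: accP | apply: rejN].
Qed.
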